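(* Let $q$ be a power of $2$. Let $b\in\mathbb{F}_q^*$ and $\delta\in\mathbb{F}_{q^2}$ with $b\,\mathrm{Tr}_{q^2/q}(\delta)=1$. Then the compositional inverse of $$P(x)=b(x^q+x+\delta)^{\frac{q^2+q}{2}+1}+x$$ over $\mathbb{F}_{q^2}$ is $$P^{-1}(x)=x+b\left(\mathrm{Tr}_{q^2/q}(\delta)^{-1}(x^q+x)^2+\mathrm{Tr}_{q^2/q}(\delta)^{-1}\delta^{q+1}+\delta\right)^{1+(q^2+q)/2}.$$
   Context: $\mathrm{Tr}_{q^2/q}(y)=y+y^q$. The compositional inverse of a permutation polynomial $f$ of $\mathbb{F}_{Q}$ is the unique polynomial $f^{-1}$ (modulo $x^Q-x$) with $f(f^{-1}(c))=f^{-1}(f(c))=c$ for all $c\in\mathbb{F}_Q$; in particular the statement includes that $P$ permutes $\mathbb{F}_{q^2}$. *)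

From HB Require Import structures.
From mathcomp Require Import all_boot all_order all_algebra all_field.
Set Implicit Arguments. Unset Strict Implicit. Unset Printing Implicit Defensive.
Import GRing.Theory.
Local Open Scope ring_scope.

Definition trq (F : finFieldType) (q : nat) (y : F) : F := y + y ^+ q.

Definition Ppoly (F : finFieldType) (q : nat) (b delta : F) (x : F) : F :=
  b * (x ^+ q + x + delta) ^+ ((q ^ 2 + q) %/ 2 + 1)%N + x.

Definition Pinv (F : finFieldType) (q : nat) (b delta : F) (x : F) : F :=
  x + b * ((trq q delta)^-1 * (x ^+ q + x) ^+ 2
           + (trq q delta)^-1 * delta ^+ (q + 1)%N + delta) ^+ (1 + (q ^ 2 + q) %/ 2)%N.

From HB Require Import structures.
From mathcomp Require Import all_boot all_order all_algebra all_field.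
From mathcomp Require Import ring.
Import GRing.Theory.
Local Open Scope ring_scope.

(* Write z = Tr(x) and y = z + delta, so that P(x) = b y^(E+1) + x with
   E = (q^2+q)/2.  Since z lies in F_q, Tr(y) = Tr(delta) = 1/b; and m = y^E is
   a square root of the norm y^(q+1), hence also lies in F_q.  Therefore
   Tr(P(x)) = b m Tr(y) + z = m + z, and in characteristic 2
   (m + z)^2 = y^(q+1) + z^2 = z Tr(delta) + delta^(q+1), which recovers y from
   P(x): the claimed formula is a left inverse of P, hence its two-sided
   inverse because F is finite. *)

Section QuadraticExtensionCharTwo.

Variables (F : finFieldType) (k : nat).
Hypotheses (k_gt0 : (0 < k)%N) (cardF : #|F| = ((2 ^ k) ^ 2)%N).

Local Notation q := (2 ^ k)%N.
Local Notation E := ((q ^ 2 + q) %/ 2)%N.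

Lemma pchar2_F : 2 \in [pchar F].
Proof. by apply: (card_finPcharP (n := (k * 2)%N)); rewrite // cardF expnM. Qed.

Lemma frobD (x y : F) : (x + y) ^+ q = x ^+ q + y ^+ q.
Proof.
by apply: exprDn_pchar; rewrite pnatX (eq_pnat _ (pcharf_eq pchar2_F)) pnat_id.
Qed.

Let addrr2 : forall x : F, x + x = 0 := addrr_pchar2 pchar2_F.

Lemma expr_card (x : F) : x ^+ (q ^ 2) = x.
Proof. by rewrite -cardF expf_card. Qed.

Lemma sqrf_inj : injective (fun x : F => x ^+ 2).
Proof.
by move=> x y /= eq_sqr; apply: (fmorph_inj (pFrobenius_aut pchar2_F)).
Qed.

Lemma frob_fixed_sqr (m : F) : (m ^+ 2) ^+ q = m ^+ 2 -> m ^+ q = m.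
Proof. by move=> fix_m2; apply: sqrf_inj; rewrite /= exprAC. Qed.

Lemma norm_frob (y : F) : (y ^+ (q + 1)) ^+ q = y ^+ (q + 1).
Proof. by rewrite exprD expr1 exprMn -exprM mulnn expr_card mulrC. Qed.

Lemma half_norm_exp : (E * 2 = q ^ 2 + q)%N.
Proof.
have two_dvd_q : (2 %| q)%N by rewrite dvdn_exp.
by rewrite divnK // dvdn_add // dvdn_exp.
Qed.

Lemma sqr_half_norm (y : F) : (y ^+ E) ^+ 2 = y ^+ (q + 1).
Proof. by rewrite -exprM half_norm_exp !exprD expr_card expr1 mulrC. Qed.

Lemma half_norm_frob (y : F) : (y ^+ E) ^+ q = y ^+ E.
Proof. by apply: frob_fixed_sqr; rewrite sqr_half_norm norm_frob. Qed.

Lemma trqD (x y : F) : trq q (x + y) = trq q x + trq q y.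
Proof. by rewrite /trq frobD addrACA. Qed.

Lemma trq_frob (x : F) : (trq q x) ^+ q = trq q x.
Proof. by rewrite /trq frobD -exprM mulnn expr_card addrC. Qed.

Lemma trq_fixed (z : F) : z ^+ q = z -> trq q z = 0.
Proof. by move=> z_frob; rewrite /trq z_frob addrr2. Qed.

Variables (b delta : F).
Hypotheses (b_frob : b ^+ q = b) (b_trq : b * trq q delta = 1).

Local Notation T := (trq q delta).

Lemma trq_neq0 : T != 0.
Proof.
by apply/eqP => T0; move: b_trq; rewrite T0 mulr0 => /eqP; rewrite eq_sym oner_eq0.
Qed.

Lemma PpolyE (x : F) : Ppoly q b delta x = b * (trq q x + delta) ^+ E.+1 + x.
Proof. by rewrite /Ppoly /trq (addrC (x ^+ q)) addn1. Qed.

Lemma PinvE (c : F) :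
  Pinv q b delta c
  = c + b * (T^-1 * trq q c ^+ 2 + T^-1 * delta ^+ (q + 1) + delta) ^+ E.+1.
Proof. by rewrite /Pinv /trq (addrC (c ^+ q)) add1n. Qed.

Lemma trq_Ppoly (x : F) :
  trq q (Ppoly q b delta x) = (trq q x + delta) ^+ E + trq q x.
Proof.
rewrite PpolyE trqD; set y := trq q x + delta.
have trq_y : trq q y = T by rewrite trqD trq_fixed ?trq_frob ?add0r.
have -> : trq q (b * y ^+ E.+1) = b * trq q y * y ^+ E.
  by rewrite /trq exprS !exprMn b_frob half_norm_frob; ring.
by rewrite trq_y b_trq mul1r.
Qed.

Lemma norm_add_frob_fixed (z : F) : z ^+ q = z ->
  (z + delta) ^+ (q + 1) + z ^+ 2 = z * T + delta ^+ (q + 1).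
Proof.
move=> z_frob; rewrite !exprD !expr1 frobD z_frob /trq.
have -> : (z + delta ^+ q) * (z + delta) + z ^+ 2
          = z * (delta + delta ^+ q) + delta ^+ q * delta + (z ^+ 2 + z ^+ 2).
  by ring.
by rewrite addrr2 addr0.
Qed.

Lemma Pinv_Ppoly (x : F) : Pinv q b delta (Ppoly q b delta x) = x.
Proof.
rewrite PinvE trq_Ppoly; set z := trq q x; set y := z + delta.
have -> : T^-1 * (y ^+ E + z) ^+ 2 + T^-1 * delta ^+ (q + 1) + delta = y.
  rewrite -mulrDr sqrrD mulr2n addrr2 addr0 sqr_half_norm.
  rewrite norm_add_frob_fixed ?trq_frob // -addrA addrr2 addr0.
  by rewrite mulrC mulfK ?trq_neq0.
by rewrite PpolyE -/z -/y addrAC addrr2 add0r.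
Qed.

Lemma Ppoly_Pinv : cancel (Pinv q b delta) (Ppoly q b delta).
Proof.
have /injF_bij bij_P : injective (Ppoly q b delta) := can_inj Pinv_Ppoly.
exact/(bij_can_sym bij_P)/Pinv_Ppoly.
Qed.

End QuadraticExtensionCharTwo.

Theorem theorem3p4 (k : nat) (F : finFieldType) (b delta : F) :
  (0 < k)%N ->
  #|F| = ((2 ^ k) ^ 2)%N ->
  b ^+ (2 ^ k) = b -> b != 0 ->
  b * trq (2 ^ k) delta = 1 ->
  (forall c : F, Ppoly (2 ^ k) b delta (Pinv (2 ^ k) b delta c) = c) /\
  (forall c : F, Pinv (2 ^ k) b delta (Ppoly (2 ^ k) b delta c) = c).
Proof.
(* b != 0 is implied by b * Tr(delta) = 1. *)
move=> k_gt0 cardF b_frob _ b_trq.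
by split=> c; [exact: Ppoly_Pinv | exact: Pinv_Ppoly].
Qed.
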